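(* Let $A$, $Q$, $H\subseteq A^Q$ be non-empty finite sets and $\mathcal F$ a clone with carrier $A$ such that (a) $\mathcal F$ satisfies $\Delta^\partial$, or (b) $\mathcal F$ contains a $\partial$-function and $|H(q)|\le2$ for all $q\in Q$. Suppose $H\in\mathrm{Inv}_Q\mathcal F$. Let $p,q\in Q$ and $a\in H(p)$, and suppose $H$ weakly separates $p$ from $q$ at the point $a$. Then $H$ strongly separates $p$ from $q$ at the point $a$.
   Context: $\mathcal O(A)=\bigcup_{n<\omega}A^{A^n}$; $\mathcal F_{[n]}=\mathcal F\cap A^{A^n}$; $A^3_3$ is the set of triples $\mathbf a=a_0a_1a_2\in A^3$ with three distinct entries, $\mathrm{ran}\,\mathbf a$ the set of entries. A clone with carrier $A$ is a subset of $\mathcal O(A)$ containing all projections and closed under composition. For $f\in\mathcal O(A)_{[n]}$ and $h_i\in A^Q$, $f(h_0,\dots,h_{n-1})$ is $q\mapsto f(h_0(q)\dots h_{n-1}(q))$; $\mathrm{Inv}_Q\mathcal F$ is the set of $H\subseteq A^Q$ closed under all such compositions with $f\in\mathcal F$. $H(q)=\{h(q):h\in H\}$. A $\partial$-function is $\partial\in\mathcal O(A)_{[3]}$ with $\partial(xxy)=\partial(xyx)=\partial(yxx)=x$; $\mathcal F$ satisfies $\Delta^\partial$ if for all $\mathbf a\in A^3_3$ and $a\in\mathrm{ran}\,\mathbf a$ there is a $\partial$-function $\partial\in\mathcal F$ with $\partial(\mathbf a)=a$. $H$ weakly separates $p$ from $q$ at $a\in H(p)$ if there are $h_1,h_2\in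 H$ with $h_1(p)=h_2(p)=a$ and $h_1(q)\ne h_2(q)$. $H$ strongly separates $p$ from $q$ at $a$ if for every $b\in H(q)$ there is $h\in H$ with $h(p)=a$ and $h(q)=b$. *)

From mathcomp Require Import all_boot.
Set Implicit Arguments. Unset Strict Implicit. Unset Printing Implicit Defensive.

Definition op (A : Type) (n : nat) := ('I_n -> A) -> A.

(* A set of finitary operations (O(A) = union of A^{A^n}), given by its
   n-ary parts F n = F_[n]. *)
Definition opset (A : Type) := forall n : nat, op A n -> Prop.

Definition is_clone (A : Type) (F : opset A) : Prop :=
  (forall n (i : 'I_n), F n (fun x => x i)) /\
  (forall n m (f : op A n) (g : 'I_n -> op A m),
      F n f -> (forall i, F m (g i)) -> F m (fun x => f (fun i => g i x))).

Definition tr3 (A : Type) (x y z : A) : 'I_3 -> A :=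
  fun i => match val i with 0 => x | 1 => y | _ => z end.

Definition is_partial (A : Type) (d : op A 3) : Prop :=
  forall x y : A, d (tr3 x x y) = x /\ d (tr3 x y x) = x /\ d (tr3 y x x) = x.

Definition Delta_partial (A : eqType) (F : opset A) : Prop :=
  forall a0 a1 a2 : A, a0 != a1 -> a0 != a2 -> a1 != a2 ->
  forall a : A, (a == a0) || (a == a1) || (a == a2) ->
  exists d : op A 3, F 3 d /\ is_partial d /\ d (tr3 a0 a1 a2) = a.

Definition Inv (A Q : finType) (F : opset A) (H : {set {ffun Q -> A}}) : Prop :=
  forall n (f : op A n) (h : 'I_n -> {ffun Q -> A}),
    F n f -> (forall i, h i \in H) -> [ffun q => f (fun i => h i q)] \in H.

Definition Hat (A Q : finType) (H : {set {ffun Q -> A}}) (q : Q) : {set A} :=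
  [set (h : {ffun Q -> A}) q | h in H].

Definition weakly_separates (A Q : finType) (H : {set {ffun Q -> A}})
  (p q : Q) (a : A) : Prop :=
  a \in Hat H p /\
  exists h1 h2 : {ffun Q -> A}, [/\ h1 \in H, h2 \in H, h1 p = a, h2 p = a & h1 q != h2 q].

Definition strongly_separates (A Q : finType) (H : {set {ffun Q -> A}})
  (p q : Q) (a : A) : Prop :=
  forall b, b \in Hat H q -> exists2 h, h \in H & h p = a /\ h q = b.

(* Let h1, h2 in H agree (= a) at p and differ at q, and let b = g q with g in H.
   If b is h1 q or h2 q we are done.  Otherwise h1 q, h2 q, b are three distinct
   values of H(q).  Under (b) this contradicts |H(q)| <= 2.  Under (a), the
   Delta^partial condition yields a partial function d in F with
   d(h1 q, h2 q, b) = b; the pointwise composite h = d(h1, h2, g) lies in H since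
   H is F-invariant, and h p = d(a, a, g p) = a because d is a partial function,
   while h q = b. *)
From Stdlib Require Import FunctionalExtensionality.
From mathcomp Require Import all_boot.

Set Implicit Arguments.
Unset Strict Implicit.
Unset Printing Implicit Defensive.

Section TernaryComposite.

Variables (A Q : finType).

Definition compose3 (d : op A 3) (f g k : {ffun Q -> A}) : {ffun Q -> A} :=
  [ffun r => d (tr3 (f r) (g r) (k r))].

Lemma tr3_eval (f g k : {ffun Q -> A}) (r : Q) :
  (fun i => tr3 f g k i r) = tr3 (f r) (g r) (k r).
Proof. by apply: functional_extensionality => -[[|[|m]] Hi]. Qed.

Lemma Inv_compose3 (F : opset A) (H : {set {ffun Q -> A}}) (d : op A 3)
    (f g k : {ffun Q -> A}) :
  Inv F H -> F 3 d -> f \in H -> g \in H -> k \in H -> compose3 d f g k \in H.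
Proof.
move=> invH Fd Hf Hg Hk.
have -> : compose3 d f g k = [ffun r => d (fun i => tr3 f g k i r)].
  by apply/ffunP => r; rewrite !ffunE tr3_eval.
by apply: invH => // -[[|[|m]] Hi].
Qed.

Lemma compose3_partial_agree (d : op A 3) (f g k : {ffun Q -> A}) (p : Q) :
  is_partial d -> f p = g p -> compose3 d f g k p = f p.
Proof. by move=> Pd fg; rewrite ffunE -fg; case: (Pd (f p) (k p)). Qed.

End TernaryComposite.

Lemma card_three_distinct (T : finType) (S : {set T}) (x y z : T) :
  x != y -> x != z -> y != z -> x \in S -> y \in S -> z \in S -> 3 <= #|S|.
Proof.
move=> nxy nxz nyz Sx Sy Sz.
have sub : [set x; y; z] \subset S by apply/subsetP => w; rewrite !inE => /orP[/orP[]|] /eqP ->.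
apply: leq_trans (subset_leq_card sub).
by rewrite -setUA cardsU1 !inE negb_or nxy nxz /= cards2 nyz.
Qed.

Theorem lemma1 (A Q : finType) (H : {set {ffun Q -> A}}) (F : opset A) :
  0 < #|A| -> 0 < #|Q| -> H != set0 ->
  is_clone F ->
  (Delta_partial F \/
   ((exists d : op A 3, F 3 d /\ is_partial d) /\
    (forall q : Q, #|Hat H q| <= 2))) ->
  Inv F H ->
  forall (p q : Q) (a : A), a \in Hat H p ->
  weakly_separates H p q a ->
  strongly_separates H p q a.
Proof.
move=> _ _ _ _ hyp invH p q a _ [_ [h1 [h2 [H1 H2 h1p h2p n12]]]] b /imsetP [g Hg ->].
have [e1|n1] := eqVneq (h1 q) (g q); first by exists h1.
have [e2|n2] := eqVneq (h2 q) (g q); first by exists h2.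
case: hyp => [DP|[_ card2]]; last first.
  have inHq (h : {ffun Q -> A}) : h \in H -> h q \in Hat H q by move=> Hh; apply: imset_f.
  have := card_three_distinct (S := Hat H q) n12 n1 n2 (inHq _ H1) (inHq _ H2) (inHq _ Hg).
  by rewrite ltnNge card2.
have gq_in : (g q == h1 q) || (g q == h2 q) || (g q == g q) by rewrite eqxx orbT.
have [d [Fd [Pd dq]]] := DP _ _ _ n12 n1 n2 _ gq_in.
exists (compose3 d h1 h2 g); first exact: Inv_compose3 invH Fd H1 H2 Hg.
split; last by rewrite ffunE dq.
by rewrite compose3_partial_agree // h1p h2p.
Qed.
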